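(* For every program $C$: (1) for every set $S$ of hyperquantities, $\mathrm{whp}[C](\prod S)=\prod_{ff\in S}\mathrm{whp}[C](ff)$ and $\mathrm{whp}[C](\sum S)=\sum_{ff\in S}\mathrm{whp}[C](ff)$, where $\prod S$ and $\sum S$ are the pointwise products and sums in $[0,+\infty]$; (2) for every constant $k\in[0,+\infty]$, $\mathrm{whp}[C](\lambda f.\,k)=\lambda f.\,k$; (3) for all hyperquantities $ff,gg$, if $ff\preceq gg$ then $\mathrm{whp}[C](ff)\preceq\mathrm{whp}[C](gg)$.
   Context: Semiring. Fix $\mathcal A=\langle U,\oplus,\odot,\mathbb 0,\mathbb 1\rangle$, a possibly partial semiring: $\langle U,\oplus,\mathbb 0\rangle$ is a commutative monoid in which $\oplus$ may be partial, $\langle U,\odot,\mathbb 1\rangle$ is a (total) monoid, $\odot$ distributes over $\oplus$ on both sides, and $\mathbb 0\odot u=u\odot\mathbb 0=\mathbb 0$. The natural order is $u\le v$ iff $u\oplus w=v$ for some $w\in U$. Standing assumptions: $\le$ is a complete partial order; $\mathcal A$ is complete (there is an infinitary sum $\bigoplus_{i\in I}$ that agrees with $\oplus$ on finite index sets, satisfies $v\odot\bigoplus_i u_i=\bigoplus_i v\odot u_i$ and $(\bigoplus_i u_i)\odot v=\bigoplus_i u_i\odot v$ whenever defined, and is invariant under partitioning the index set); $\mathcal A$ is Scott continuous; and $U$ has a greatest element. States and quantities. $\mathrm{Vars}$ finite, $\Sigma=\{\sigma:\mathrm{Vars}\to\mathbb N\}$, $\sigma[x\mapsto v]$ updated state;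 expressions denote $\llbracket e\rrbracket:\Sigma\to\mathbb N\cup U$. A quantity is $f:\Sigma\to U$; $\mathbb A$ the set of quantities; operations lifted pointwise; $[\varphi](\sigma)=\mathbb 1$ if $\sigma\models\varphi$, else $\mathbb 0$; $f[x/\alpha]=\sigma\mapsto f(\sigma[x\mapsto\alpha])$. Programs $C::= x:=e\mid x:=\ast\mid \mathtt{weight}\ e\mid C;C\mid C+C\mid \mathtt{iter}(C,e,e')$, assumed well-formed so that all sums arising are defined. Strongest post $\mathrm{sp}[C]:\mathbb A\to\mathbb A$: $\mathrm{sp}[x:=e](f)=\bigoplus_{\alpha\in\mathbb N}f[x/\alpha]\odot[x=e[x/\alpha]]$ with $[x=e[x/\alpha]](\sigma)=\mathbb 1$ iff $\sigma(x)=\llbracket e\rrbracket(\sigma[x\mapsto\alpha])$; $\mathrm{sp}[x:=\ast](f)=\bigoplus_{\alpha}f[x/\alpha]$; $\mathrm{sp}[\mathtt{weight}\ w](f)=f\odot\llbracket w\rrbracket$; $\mathrm{sp}[C_1;C_2](f)=\mathrm{sp}[C_2](\mathrm{sp}[C_1](f))$; $\mathrm{sp}[C_1+C_2](f)=\mathrm{sp}[C_1](f)\oplus\mathrm{sp}[C_2](f)$; $\mathrm{sp}[\mathtt{iter}(C,e,e')](f)=\big(\mathrm{lfp}\,X.\ f\oplus\mathrm{sp}[C](X\odot\llbracket e\rrbracket)\big)\odot\llbracket e'\rrbracket$ (pointwise natural order on $\mathbb A$). Hyperquantities. A hyperquantity is a function $ff:\mathbb A\to[0,+\infty]$; $ff\preceq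 gg$ iff $ff(f)\le gg(f)$ for all $f\in\mathbb A$. For $\nu\in\mathbb A$, $\chi_\nu(g)=1$ if $g=\nu$ and $0$ otherwise. Arithmetic on values in $[0,+\infty]$ with $0\cdot\infty=0$. Weakest hyper pre $\mathrm{whp}[C]$, defined inductively: $\mathrm{whp}[x:=e](ff)=\lambda f.\ ff(\mathrm{sp}[x:=e](f))$; $\mathrm{whp}[x:=\ast](ff)=\lambda f.\ ff(\bigoplus_{\alpha}f[x/\alpha])$; $\mathrm{whp}[\mathtt{weight}\ w](ff)=\lambda f.\ ff(f\odot\llbracket w\rrbracket)$; $\mathrm{whp}[C_1;C_2](ff)=\mathrm{whp}[C_1](\mathrm{whp}[C_2](ff))$; $\mathrm{whp}[C_1+C_2](ff)=\lambda f.\ \sum_{\nu_1,\nu_2\in\mathbb A}ff(\nu_1\oplus\nu_2)\cdot\mathrm{whp}[C_1](\chi_{\nu_1})(f)\cdot\mathrm{whp}[C_2](\chi_{\nu_2})(f)$ (terms with $\nu_1\oplus\nu_2$ undefined omitted); $\mathrm{whp}[\mathtt{iter}(C,e,e')](ff)=\lambda f.\ ff\big((\mathrm{lfp}\,X.\ f\oplus\mathrm{sp}[C](X\odot\llbracket e\rrbracket))\odot\llbracket e'\rrbracket\big)$. *)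

From HB Require Import structures.
From mathcomp Require Import all_boot all_order all_algebra.
From mathcomp Require Import boolp classical_sets functions cardinality fsbigop.
From mathcomp Require Import reals constructive_ereal ereal esum.
From Stdlib Require Import ClassicalEpsilon.

Set Implicit Arguments.
Unset Strict Implicit.
Unset Printing Implicit Defensive.

Import Order.TTheory GRing.Theory Num.Theory.
Local Open Scope classical_set_scope.
Local Open Scope ereal_scope.

Definition natle {U : Type} (padd : U -> U -> option U) (u v : U) : Prop :=
  exists w, padd u w = Some v.

Definition rel_directed {U : Type} (le : U -> U -> Prop) (D : set U) : Prop :=
  (exists x, D x) /\
  forall x y, D x -> D y -> exists2 z, D z & le x z /\ le y z.

Definition rel_is_lub {U : Type} (le : U -> U -> Prop) (D : set U) (d : U) : Prop :=
  (forall x, D x -> le x d) /\ (forall b, (forall x, D x -> le x b) -> le d b).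

Record psemiring := PSemiring {
  car :> Type;
  padd : car -> car -> option car;
  pmul : car -> car -> car;
  pzero : car;
  pone : car;
  psum : forall I : Type, (I -> car) -> option car;
  padd_comm : forall u v, padd u v = padd v u;
  padd_assoc : forall u v w,
    obind (fun x => padd x w) (padd u v) = obind (padd u) (padd v w);
  padd_0 : forall u, padd u pzero = Some u;
  pmul_assoc : forall u v w, pmul u (pmul v w) = pmul (pmul u v) w;
  pmul_1l : forall u, pmul pone u = u;
  pmul_1r : forall u, pmul u pone = u;
  pmul_Dl : forall u v w s, padd v w = Some s ->
    padd (pmul u v) (pmul u w) = Some (pmul u s);
  pmul_Dr : forall u v w s, padd v w = Some s ->
    padd (pmul v u) (pmul w u) = Some (pmul s u);
  pmul_0l : forall u, pmul pzero u = pzero;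
  pmul_0r : forall u, pmul u pzero = pzero;
  natle_antisym : forall u v, natle padd u v -> natle padd v u -> u = v;
  natle_cpo : forall D : set car, rel_directed (natle padd) D ->
    exists d, rel_is_lub (natle padd) D d;
  psum_empty : forall (I : Type) (u : I -> car), (I -> False) -> psum u = Some pzero;
  psum_single : forall (I : Type) (u : I -> car) (i0 : I),
    (forall i, i = i0) -> psum u = Some (u i0);
  psum_bool : forall u : bool -> car, psum u = padd (u true) (u false);
  psum_mull : forall (I : Type) (u : I -> car) v s,
    psum u = Some s -> psum (fun i => pmul v (u i)) = Some (pmul v s);
  psum_mulr : forall (I : Type) (u : I -> car) v s,
    psum u = Some s -> psum (fun i => pmul (u i) v) = Some (pmul s v);
  psum_partition : forall (I J : Type) (p : I -> J) (u : I -> car) s,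
    psum u = Some s <->
    exists t : J -> car,
      (forall j, psum (fun i : {i : I | p i = j} => u (proj1_sig i)) = Some (t j))
      /\ psum t = Some s;
  scott_mull : forall (D : set car) d u, rel_directed (natle padd) D ->
    rel_is_lub (natle padd) D d ->
    rel_is_lub (natle padd) [set pmul u x | x in D] (pmul u d);
  scott_mulr : forall (D : set car) d u, rel_directed (natle padd) D ->
    rel_is_lub (natle padd) D d ->
    rel_is_lub (natle padd) [set pmul x u | x in D] (pmul d u);
  scott_add : forall (D : set car) d u e, rel_directed (natle padd) D ->
    rel_is_lub (natle padd) D d -> padd u d = Some e ->
    rel_is_lub (natle padd) [set y | exists2 x, D x & padd u x = Some y] e;
  has_top : exists t, forall u, natle padd u t
}.

Arguments padd {_}. Arguments pmul {_}. Arguments pzero {_}. Arguments pone {_}.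
Arguments psum {_ _}.

Section Programs.
Variables (A : psemiring) (V : finType).

Definition state := V -> nat.

Definition upd (s : state) (x : V) (v : nat) : state :=
  fun y => if y == x then v else s y.

(* quantities f : Sigma -> U (classical choice structure for sums over them) *)
Definition quant := {classic (state -> A)}.

(* programs; expressions are given by their denotations *)
Inductive prog : Type :=
| PAssign (x : V) (e : state -> nat)
| PHavoc (x : V)
| PWeight (w : state -> A)
| PSeq (c1 c2 : prog)
| PChoice (c1 c2 : prog)
| PIter (c : prog) (e e' : state -> A).

Definition qlift (h : state -> option A) : option quant :=
  if pselect (forall s, h s <> None)
  then Some (fun s => odflt pzero (h s)) else None.

Definition qadd (f g : quant) : option quant :=
  qlift (fun s => padd (f s) (g s)).
Definition qsum (I : Type) (F : I -> quant) : option quant :=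
  qlift (fun s => psum (fun i => F i s)).
Definition qmul (f g : quant) : quant := fun s => pmul (f s) (g s).

Definition qle (f g : quant) : Prop := forall s, natle padd (f s) (g s).

Definition is_lfp (Phi : quant -> option quant) (X : quant) : Prop :=
  Phi X = Some X /\ forall Y, Phi Y = Some Y -> qle X Y.

Definition plfp (Phi : quant -> option quant) : option quant :=
  match excluded_middle_informative (exists X, is_lfp Phi X) with
  | left H => Some (proj1_sig (constructive_indefinite_description _ H))
  | right _ => None
  end.

(* strongest post; None = some sum arising is undefined *)
Fixpoint sp (C : prog) (f : quant) : option quant :=
  match C with
  | PAssign x e =>
      qsum (fun a : nat => (fun s =>
        pmul (f (upd s x a)) (if s x == e (upd s x a) then pone else pzero)) : quant)
  | PHavoc x => qsum (fun a : nat => (fun s => f (upd s x a)) : quant)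
  | PWeight w => Some (qmul f w)
  | PSeq c1 c2 => obind (sp c2) (sp c1 f)
  | PChoice c1 c2 =>
      match sp c1 f, sp c2 f with
      | Some g1, Some g2 => qadd g1 g2
      | _, _ => None
      end
  | PIter c e e' =>
      omap (fun X => qmul X e')
           (plfp (fun X => obind (qadd f) (sp c (qmul X e))))
  end.

Definition wf (C : prog) : Prop := forall f, sp C f <> None.

Variable R : realType.

Definition hquant := quant -> \bar R.

Definition hnonneg (ff : hquant) : Prop := forall f, 0 <= ff f.

Definition hle (ff gg : hquant) : Prop := forall f, ff f <= gg f.

Definition chi (nu : quant) : hquant := fun g => if g == nu then 1 else 0.

Definition happ (ff : hquant) (o : option quant) : \bar R := oapp ff 0 o.

Fixpoint whp (C : prog) (ff : hquant) : hquant :=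
  match C with
  | PAssign x e => fun f => happ ff (sp (PAssign x e) f)
  | PHavoc x => fun f => happ ff (qsum (fun a : nat => (fun s => f (upd s x a)) : quant))
  | PWeight w => fun f => ff (qmul f w)
  | PSeq c1 c2 => whp c1 (whp c2 ff)
  | PChoice c1 c2 => fun f =>
      esum [set p : {classic (quant * quant)} | qadd p.1 p.2 <> None]
        (fun p => happ ff (qadd p.1 p.2) * whp c1 (chi p.1) f * whp c2 (chi p.2) f)
  | PIter c e e' => fun f =>
      happ ff (omap (fun X => qmul X e')
                    (plfp (fun X => obind (qadd f) (sp c (qmul X e)))))
  end.

End Programs.

(* Product of a family of values in [0,+oo] indexed by a set S: 0 if some
   factor is 0; otherwise (sup of finite products of the factors >= 1) times
   (inf of finite products of the factors < 1), with 0 * +oo = 0.  On finite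
   S this is the ordinary finite product. *)
Definition eprod (R : realType) (T : choiceType) (S : set T) (a : T -> \bar R)
    : \bar R :=
  if pselect (exists2 x, S x & a x = 0) then 0
  else ereal_sup [set \big[mule/1]_(x \in F) a x
                   | F in fsets [set x | S x /\ 1 <= a x]] *
       ereal_inf [set \big[mule/1]_(x \in F) a x
                   | F in fsets [set x | S x /\ a x < 1]].

Definition hprod (R : realType) (A : psemiring) (V : finType)
    (S : set (hquant A V R)) : hquant A V R :=
  fun f => eprod S (fun ff => ff f).
Definition hsum (R : realType) (A : psemiring) (V : finType)
    (S : set (hquant A V R)) : hquant A V R :=
  fun f => esum S (fun ff => ff f).

From HB Require Import structures.
From mathcomp Require Import all_boot all_order all_algebra.
From mathcomp Require Import boolp classical_sets functions cardinality fsbigop.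
From mathcomp Require Import reals constructive_ereal ereal esum.

(* For a nonnegative hyperquantity, whp[C] ff is just ff evaluated at the
   strongest post: the only nontrivial case is nondeterministic choice, where
   the characteristic functions chi kill every summand but the one indexed by
   the pair (sp[C1] f, sp[C2] f).  All three properties are then properties of
   evaluation at a single quantity. *)

Import Order.TTheory GRing.Theory Num.Theory.
Local Open Scope classical_set_scope.
Local Open Scope ereal_scope.

Lemma eprod_ge0 (R : realType) (T : choiceType) (S : set T) (a : T -> \bar R) :
  (forall x, S x -> 0 <= a x) -> 0 <= eprod S a.
Proof.
move=> a0; rewrite /eprod; destruct pselect; first by []; apply: mule_ge0.
  apply: (@le_trans _ _ 1) => //; apply: ereal_sup_ubound.
  by exists set0; [exact: fsets_set0 | exact: fsbig_set0].
apply: le_ereal_inf_tmp => _ [F [finF FS] <-].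
rewrite fsbig_finite // big_seq; apply: prode_ge0 => i.
by rewrite in_fset_set // inE => /FS [Si _]; exact: a0.
Qed.

Lemma eq_eprod (R : realType) (T : choiceType) (S : set T) (a b : T -> \bar R) :
  (forall x, S x -> a x = b x) -> eprod S a = eprod S b.
Proof.
move=> eab; rewrite /eprod.
have -> : (exists2 x, S x & a x = 0) = (exists2 x, S x & b x = 0).
  by apply: propext; split => -[x Sx H]; exists x; rewrite // ?eab // -eab.
have eq_prods P : P `<=` S ->
    [set \big[mule/1]_(x \in F) a x | F in fsets P] =
    [set \big[mule/1]_(x \in F) b x | F in fsets P].
  move=> PS; apply/seteqP; split => _ [F [finF FP] <-]; exists F => //;
    by apply: eq_fsbigr => x /[!inE] /FP /PS /eab.
rewrite !eq_prods; try by move=> x [].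
have eq_restr (r : \bar R -> bool) :
    [set x | S x /\ r (a x)] = [set x | S x /\ r (b x)].
  by apply/seteqP; split => x [Sx H]; split; rewrite // ?eab // -eab.
by rewrite (eq_restr (fun y => 1 <= y)) (eq_restr (fun y => y < 1)).
Qed.

Section WeakestHyperPre.
Variables (R : realType) (A : psemiring) (V : finType).

Local Notation quant := (quant A V).
Local Notation hquant := (hquant A V R).

Lemma happ_ge0 (ff : hquant) (o : option quant) :
  hnonneg ff -> 0 <= happ ff o.
Proof. by case: o => [g|] /=. Qed.

Lemma chi_ge0 (nu : quant) : hnonneg (@chi A V R nu).
Proof. by move=> g; rewrite /chi; case: (g == nu). Qed.

Lemma esum_chi_pair (ff : hquant) (o1 o2 : option quant) : hnonneg ff ->
  esum [set p : {classic (quant * quant)} | qadd p.1 p.2 <> None]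
    (fun p => happ ff (qadd p.1 p.2) *
              happ (@chi A V R p.1) o1 * happ (@chi A V R p.2) o2)
  = happ ff (match o1, o2 with
             | Some g1, Some g2 => qadd g1 g2
             | _, _ => None
             end).
Proof.
move=> ff_ge0; set D := [set p | _].
case: o1 => [g1|]; last by rewrite esum1 // => p _; rewrite mule0 mul0e.
case: o2 => [g2|]; last by rewrite esum1 // => p _; rewrite mule0.
have chi_pairE (p : {classic (quant * quant)}) :
    happ (@chi A V R p.1) (Some g1) * happ (@chi A V R p.2) (Some g2) =
    if p == (g1, g2) then 1 else 0.
  have [->|pNE] := eqVneq p (g1, g2); first by rewrite /chi /= !eqxx mule1.
  rewrite /= /chi; case: eqP => [E1|]; last by rewrite mul0e.
  case: eqP => [E2|]; last by rewrite mule0.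
  by case/eqP: pNE; case: p E1 E2 => /= ? ? -> ->.
under eq_esum => p _ do rewrite -muleA chi_pairE.
case E: (qadd g1 g2) => [?|] /=; last first.
  rewrite esum1 // => p Dp; case: eqP => [pE|]; last by rewrite mule0.
  by exfalso; apply: Dp; rewrite pE E.
pose p0 : {classic (quant * quant)} := (g1, g2).
have Dp0 : [set p0] `<=` D by move=> p ->; rewrite /D /= E.
under eq_esum => p _ do rewrite (fun_if (mule _)) mule1 mule0 -in_set1.
by rewrite -esum_mkcondr setIidr // esum_set1 /= E //; exact: ff_ge0.
Qed.

Lemma whp_sp (C : prog A V) (ff : hquant) (f : quant) :
  hnonneg ff -> whp C ff f = happ ff (sp C f).
Proof.
elim: C ff f => [x e|x|w|c1 IH1 c2 IH2|c1 IH1 c2 IH2|c IH e e'] ff f ff_ge0 //=.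
- have whp2_ge0 : hnonneg (whp c2 ff).
    by move=> g; rewrite IH2 //; exact: happ_ge0.
  by rewrite IH1 //; case: (sp c1 f) => //= g; exact: IH2.
- have whp1_chi nu := IH1 (@chi A V R nu) f (chi_ge0 nu).
  have whp2_chi nu := IH2 (@chi A V R nu) f (chi_ge0 nu).
  under eq_esum => p _ do rewrite whp1_chi whp2_chi.
  exact: esum_chi_pair.
Qed.

End WeakestHyperPre.

Theorem mainTheorem7 (R : realType) (A : psemiring) (V : finType) (C : prog A V) :
  wf C ->
  (* (1) products and sums of arbitrary sets of hyperquantities *)
  (forall S : set (hquant A V R), (forall ff, S ff -> hnonneg ff) ->
     whp C (hprod S) = (fun f => eprod S (fun ff => whp C ff f)) /\
     whp C (hsum S) = (fun f => esum S (fun ff => whp C ff f))) /\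
  (* (2) constants *)
  (forall k : \bar R, 0 <= k -> whp C (fun _ => k) = (fun _ => k)) /\
  (* (3) monotonicity *)
  (forall ff gg : hquant A V R, hnonneg ff -> hnonneg gg ->
     hle ff gg -> hle (whp C ff) (whp C gg)).
Proof.
move=> wfC.
have whpE (ff : hquant A V R) f : hnonneg ff ->
    exists2 g, sp C f = Some g & whp C ff f = ff g.
  move=> ff_ge0; case E: (sp C f) => [g|]; last by case: (wfC f).
  by exists g; rewrite // whp_sp // E.
split; [move=> S S_ge0; split; apply: funext => f | split].
- have hprod_ge0 : hnonneg (hprod S) by move=> h; apply: eprod_ge0 => ff Sff; exact: S_ge0.
  have [g spE ->] := whpE _ f hprod_ge0.
  apply: eq_eprod => ff /S_ge0 ff_ge0.
  by have [g' + ->] := whpE _ f ff_ge0; rewrite spE => -[->].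
- have hsum_ge0 : hnonneg (hsum S) by move=> h; apply: esum_ge0 => ff Sff; exact: S_ge0.
  have [g spE ->] := whpE _ f hsum_ge0.
  apply: eq_esum => ff /S_ge0 ff_ge0.
  by have [g' + ->] := whpE _ f ff_ge0; rewrite spE => -[->].
- move=> k k_ge0; apply: funext => f.
  by have [g _ ->] := whpE (fun _ => k) f (fun _ => k_ge0).
- move=> ff gg ff_ge0 gg_ge0 le_ffgg f; rewrite !whp_sp //.
  by case: (sp C f) => //= g; exact: le_ffgg.
Qed.
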